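(* In the $T$-period model described in the context, with short sales prohibitions (admissible strategies are predictable self-financing with $h_m(t)\ge 0$ for $m\ge 1$), if there is no multi-period arbitrage under model uncertainty, then there exists a weak risk neutral nonlinear expectation: a nonempty family $\mathcal{Q}$ of probability measures on $\Omega$ with $\sup_{Q\in\mathcal{Q}}Q(\omega)>0$ for all $\omega\in\Omega$ such that for all $0\le t\le u\le T$, all $m=1,\dots,M$ and all $\omega\in\Omega$, $$\inf_{Q\in\mathcal{Q},\,Q(\omega)>0}E_Q[S_m^*(u)\mid\mathcal{F}_t](\omega)\le S_m^*(t)(\omega).$$
   Context: Multi-period model: $\Omega=\{\omega_1,\dots,\omega_K\}$ is finite with a filtration $\mathcal{F}_0\subseteq\cdots\subseteq\mathcal{F}_T$, $\mathcal{F}_0$ trivial and $\mathcal{F}_T=2^\Omega$. $\mathcal{P}$ is a nonempty family of probability measures on $\Omega$ with $\sup_{P\in\mathcal{P}}P(\omega)>0$ for all $\omega$. Bond: $S_0(0)=1$, $S_0(t)=(1+r_1)\cdots(1+r_t)$, each $r_t\ge 0$ $\mathcal{F}_{t-1}$-measurable. Risky securities $S_m(t)$ are $\mathcal{F}_t$-measurable with $S_m(0)>0$. Discounted prices $S_m^*(t)=S_m(t)/S_0(t)$, $\Delta S_m^*(t)=S_m^*(t)-S_m^*(t-1)$. A trading strategy $H=(h(t))_{t=1}^T$, $h(t)=(h_0(t),\dots,h_M(t))$ $\mathcal{F}_{t-1}$-measurable; $V^*(0)=h_0(1)+\sum_m h_m(1)S_m^*(0)$, $V^*(t)=h_0(t)+\sum_m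 h_m(t)S_m^*(t)$. $H$ is self-financing if $[h_0(t+1)-h_0(t)]+\sum_m[h_m(t+1)-h_m(t)]S_m^*(t)=0$ for $t=1,\dots,T-1$. An admissible self-financing $H$ is a multi-period arbitrage under model uncertainty if $V^*(0)=0$, $V^*(T)\ge 0$ on $\Omega$, and $\sup_{P\in\mathcal{P}}E_P[V^*(T)]>0$. For $Q$ with $Q(\omega)>0$, $E_Q[X\mid\mathcal{F}_t](\omega)$ is the $Q$-average of $X$ over the $\mathcal{F}_t$-atom containing $\omega$. *)

From HB Require Import structures.
From mathcomp Require Import all_boot all_order all_algebra.
From mathcomp Require Import boolp classical_sets reals.
Set Implicit Arguments. Unset Strict Implicit. Unset Printing Implicit Defensive.
Import Order.TTheory GRing.Theory Num.Theory.
Local Open Scope ring_scope.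
Local Open Scope classical_set_scope.

Section Market.
Variables (R : realType) (Omega : finType).

(* A filtration F_0 ⊆ ... ⊆ F_T on the finite Omega is given by its atoms:
   atom t w = the F_t-atom containing w. *)
Definition is_filtration (T : nat) (atom : nat -> Omega -> {set Omega}) : Prop :=
  [/\ (forall t w, (t <= T)%N -> w \in atom t w),
      (forall t w w', (t <= T)%N -> w' \in atom t w -> atom t w' = atom t w),
      (forall t w, (t < T)%N -> atom t.+1 w \subset atom t w),
      (forall w, atom 0%N w = finset.setTfor Omega) &
      (forall w, atom T w = finset.set1 w)].

Definition meas_at (atom : nat -> Omega -> {set Omega}) (t : nat) (X : Omega -> R) : Prop :=
  forall w w', w' \in atom t w -> X w' = X w.

Definition is_prob (P : Omega -> R) : Prop :=
  (forall w, 0 <= P w) /\ \sum_(w : Omega) P w = 1.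

Definition expect (P : Omega -> R) (X : Omega -> R) : R := \sum_(w : Omega) P w * X w.

Definition cond_expect (atom : nat -> Omega -> {set Omega}) (Q : Omega -> R)
  (X : Omega -> R) (t : nat) (w : Omega) : R :=
  (\sum_(w' in atom t w) Q w' * X w') / (\sum_(w' in atom t w) Q w').

Definition bond (r : nat -> Omega -> R) (t : nat) (w : Omega) : R :=
  \prod_(1 <= s < t.+1) (1 + r s w).

Variable M : nat.

Definition disc (r : nat -> Omega -> R) (S : 'I_M -> nat -> Omega -> R)
  (m : 'I_M) (t : nat) (w : Omega) : R := S m t w / bond r t w.

Definition market_model (T : nat) (atom : nat -> Omega -> {set Omega})
  (r : nat -> Omega -> R) (S : 'I_M -> nat -> Omega -> R) : Prop :=
  [/\ (forall t w, (1 <= t <= T)%N -> 0 <= r t w),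
      (forall t, (1 <= t <= T)%N -> meas_at atom t.-1 (r t)),
      (forall m t, (t <= T)%N -> meas_at atom t (S m t)) &
      (forall m w, 0 < S m 0%N w)].

Section Strategy.
Variables (T : nat) (atom : nat -> Omega -> {set Omega})
  (r : nat -> Omega -> R) (S : 'I_M -> nat -> Omega -> R).
(* strategy H = (h(t))_{t=1..T}, h(t) = (h0 t, h m t) *)
Variables (h0 : nat -> Omega -> R) (h : 'I_M -> nat -> Omega -> R).

Definition V0 (w : Omega) : R :=
  h0 1%N w + \sum_(m < M) h m 1%N w * disc r S m 0%N w.

Definition Vt (t : nat) (w : Omega) : R :=
  h0 t w + \sum_(m < M) h m t w * disc r S m t w.

Definition predictable : Prop :=
  forall t, (1 <= t <= T)%N ->
    meas_at atom t.-1 (h0 t) /\ forall m, meas_at atom t.-1 (h m t).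

Definition self_financing : Prop :=
  forall t w, (1 <= t <= T.-1)%N ->
    (h0 t.+1 w - h0 t w) + \sum_(m < M) (h m t.+1 w - h m t w) * disc r S m t w = 0.

Definition no_short_sales : Prop :=
  forall m t w, (1 <= t <= T)%N -> 0 <= h m t w.

Definition admissible : Prop := [/\ predictable, self_financing & no_short_sales].

Definition arbitrage_MU (Pset : set (Omega -> R)) : Prop :=
  [/\ admissible,
      (forall w, V0 w = 0),
      (forall w, 0 <= Vt T w) &
      0 < sup [set expect P (Vt T) | P in Pset]].
End Strategy.

Definition no_arbitrage_MU (T : nat) (atom : nat -> Omega -> {set Omega})
  (r : nat -> Omega -> R) (S : 'I_M -> nat -> Omega -> R) (Pset : set (Omega -> R)) : Prop :=
  ~ exists (h0 : nat -> Omega -> R) (h : 'I_M -> nat -> Omega -> R),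
      arbitrage_MU T atom r S h0 h Pset.

Definition prob_family (Pset : set (Omega -> R)) : Prop :=
  [/\ Pset !=set0,
      (forall P, Pset P -> is_prob P) &
      (forall w, 0 < sup [set P w | P in Pset])].

End Market.

(** Suppose that at some time t and on some F_t-atom A the discounted price of
    asset m strictly increased by time u in every state of A.  Buying one unit
    of m on A at time t with borrowed cash and selling it at time u is then an
    admissible strategy without short sales whose terminal value is
    nonnegative, and strictly positive on A; as every state carries positive
    mass under some P, this is an arbitrage.  Hence, under no arbitrage, every
    atom A of F_t contains a state where S*_m(u) <= S*_m(t).  Taking for Q the
    set of all probability measures, a measure concentrated near that state
    while charging w makes E_Q[S*_m(u) | F_t](w) as close as we like to a value
    below S*_m(t)(w). *)
From HB Require Import structures.
From mathcomp Require Import all_boot all_order all_algebra.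
From mathcomp Require Import boolp classical_sets reals.
From mathcomp Require Import zify lra.
Set Implicit Arguments. Unset Strict Implicit. Unset Printing Implicit Defensive.
Import Order.TTheory GRing.Theory Num.Theory.
Local Open Scope ring_scope.
Local Open Scope classical_set_scope.

Section FiniteSums.
Variables (R : realType) (I : finType).

Lemma sum_delta_mul (P : pred I) (F : I -> R) (i : I) :
  P i -> \sum_(j | P j) (j == i)%:R * F j = F i.
Proof.
move=> Pi; rewrite (bigD1 i) //= eqxx mul1r big1 ?addr0 //.
by move=> j /andP[_ /negbTE ->]; rewrite mul0r.
Qed.

Lemma ler_term_sumr (P : pred I) (F : I -> R) (i : I) :
  P i -> (forall j, P j -> 0 <= F j) -> F i <= \sum_(j | P j) F j.
Proof.
move=> Pi F0; rewrite (bigD1 i) //= lerDl.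
by apply: sumr_ge0 => j /andP[Pj _]; exact: F0.
Qed.

Lemma sum_delta_scale (g : R) (F : I -> R) (i : I) :
  \sum_j (j == i)%:R * g * F j = g * F i.
Proof. by under eq_bigr do rewrite mulrAC; rewrite -mulr_suml sum_delta_mul // mulrC. Qed.

End FiniteSums.

Lemma le_of_forall_le_add_scaled (R : realType) (a b d : R) :
  (forall e, 0 < e < 1 -> a <= b + e * d) -> a <= b.
Proof.
move=> le_ab; apply/ler_addgt0Pr => x x0.
pose D := `|d| + 1; have D0 : 0 < D by rewrite /D; have := normr_ge0 d; lra.
pose e := x / (x + D).
have e0 : 0 < e by apply: divr_gt0; lra.
have e1 : e < 1 by rewrite /e ltr_pdivrMr; lra.
have eD : e * D <= x by rewrite /e mulrAC ler_pdivrMr; [nra | lra].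
have ed : e * d <= e * D.
  by apply: ler_wpM2l; [lra | rewrite /D; have := ler_norm d; lra].
have := le_ab e; rewrite e0 e1 => /(_ isT); lra.
Qed.

Section Probabilities.
Variables (R : realType) (Omega : finType).
Implicit Types (P Q : Omega -> R) (X : Omega -> R).

Lemma prob_le1 P v : is_prob P -> P v <= 1.
Proof. by case=> P0 <-; apply: ler_term_sumr. Qed.

Lemma expect_le_sum_norm P X : is_prob P -> expect P X <= \sum_v `|X v|.
Proof.
move=> Pp; apply: ler_sum => v _; apply: le_trans (ler_norm _) _.
rewrite normrM ger0_norm; last by case: Pp.
by apply: ler_piMl => //; exact: prob_le1.
Qed.

Lemma sup_expect_gt0 (Pset : set (Omega -> R)) X w :
  prob_family Pset -> (forall v, 0 <= X v) -> 0 < X w ->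
  0 < sup [set expect P X | P in Pset].
Proof.
case=> [[P0 PP0] Pprob Psup] X0 Xw.
have [_ [P PP <-] Pw] : exists2 y, [set P w | P in Pset] y & 0 < y.
  by apply: sup_gt => //; exists (P0 w), P0.
have [Pge0 _] := Pprob P PP.
have ub : has_ubound [set expect P X | P in Pset].
  by exists (\sum_v `|X v|) => _ [Q QP <-]; exact: expect_le_sum_norm (Pprob Q QP).
apply: lt_le_trans (ub_le_sup ub _); last by exists P.
have sum_ge : P w * X w <= \sum_v P v * X v.
  by apply: ler_term_sumr => // v _; exact: mulr_ge0.
exact: lt_le_trans (mulr_gt0 Pw Xw) sum_ge.
Qed.

Definition mix (e : R) (a b : Omega) (v : Omega) : R :=
  (1 - e) * (v == a)%:R + e * (v == b)%:R.

Lemma sum_mix (P : pred Omega) e a b X : P a -> P b ->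
  \sum_(v | P v) mix e a b v * X v = (1 - e) * X a + e * X b.
Proof.
move=> Pa Pb; rewrite /mix.
under eq_bigr do rewrite mulrDl -!mulrA.
by rewrite big_split /= -!mulr_sumr !sum_delta_mul.
Qed.

Lemma mix_prob e a b : 0 <= e <= 1 -> is_prob (mix e a b).
Proof.
move=> /andP[e0 e1]; split.
  by move=> v; apply: addr_ge0; apply: mulr_ge0 => //; lra.
rewrite -(eq_bigr _ (fun v _ => mulr1 (mix e a b v))) sum_mix //; lra.
Qed.

Lemma prob_family_probs (Pset : set (Omega -> R)) :
  prob_family Pset -> prob_family [set Q : Omega -> R | is_prob Q].
Proof.
case=> [[P PP] Pprob _]; split; [by exists P; exact: Pprob | by [] |].
move=> w; apply: lt_le_trans ltr01 _; apply: ub_le_sup.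
  by exists 1 => _ [Q Qp <-]; exact: prob_le1.
exists (mix 0 w w); first by apply: mix_prob; rewrite lexx ler01.
by rewrite /mix /= eqxx mul0r addr0 subr0 mulr1.
Qed.

Variable atom : nat -> Omega -> {set Omega}.

Lemma cond_expect_ge Q X t w c :
  (forall v, 0 <= Q v) -> 0 < \sum_(v in atom t w) Q v ->
  (forall v, c <= X v) -> c <= cond_expect atom Q X t w.
Proof.
move=> Q0 mass0 cX; rewrite /cond_expect ler_pdivlMr // mulr_sumr.
by apply: ler_sum => v _; rewrite mulrC ler_wpM2l.
Qed.

Lemma cond_expect_mix e a b X t w :
  a \in atom t w -> b \in atom t w ->
  cond_expect atom (mix e a b) X t w = (1 - e) * X a + e * X b.
Proof.
move=> aA bA; rewrite /cond_expect sum_mix //.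
rewrite -(eq_bigr _ (fun v _ => mulr1 (mix e a b v))) sum_mix //.
by rewrite !mulr1 subrK divr1.
Qed.

(* Moving almost all the mass to [ws] while keeping some mass on [w]. *)
Lemma inf_cond_expect_probs_le X t w ws :
  w \in atom t w -> ws \in atom t w ->
  inf [set cond_expect atom Q X t w | Q in [set Q | is_prob Q] `&` [set Q | 0 < Q w]]
    <= X ws.
Proof.
move=> wA wsA; set E := [set _ | _ in _].
have lb : has_lbound E.
  exists (- \sum_v `|X v|) => _ [Q [[Q0 _] Qw] <-].
  apply: cond_expect_ge => // [|v].
    by apply: lt_le_trans Qw _; apply: ler_term_sumr.
  rewrite lerNl; apply: le_trans (ler_norm _) _; rewrite normrN.
  exact: ler_term_sumr.
apply: (@le_of_forall_le_add_scaled _ _ _ (X w - X ws)) => e /andP[e0 e1].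
have mixE : E (cond_expect atom (mix e ws w) X t w).
  exists (mix e ws w) => //; split; first by apply: mix_prob; lra.
  by rewrite /= /mix eqxx; case: (w == ws) => /=; lra.
by apply: le_trans (ge_inf lb mixE) _; rewrite cond_expect_mix //; lra.
Qed.

End Probabilities.

Section Filtration.
Variables (Omega : finType) (T : nat) (atom : nat -> Omega -> {set Omega}).
Hypothesis filt : is_filtration T atom.

Lemma mem_atom t w : (t <= T)%N -> w \in atom t w.
Proof. by case: filt => self *; exact: self. Qed.

Lemma mem_atomE t x y : (t <= T)%N -> (x \in atom t y) = (atom t x == atom t y).
Proof.
case: filt => self same _ _ _ tT; apply/idP/eqP => [xy | <-]; first exact: same.
exact: self.
Qed.

Lemma atom_subset a b w : (a <= b <= T)%N -> atom b w \subset atom a w.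
Proof.
case: filt => _ _ step _ _; elim: b => [|b IH] /andP[ab bT].
  by move: ab; rewrite leqn0 => /eqP->.
have [->|neq_ab] := eqVneq a b.+1; first exact: subxx.
have abT : (a <= b <= T)%N by lia.
exact: fintype.subset_trans (step b w bT) (IH abT).
Qed.

Lemma mem_atom_le a b w v : (a <= b <= T)%N -> v \in atom b w -> v \in atom a w.
Proof. by move=> abT; apply/fintype.subsetP; exact: atom_subset. Qed.

Lemma mem_atom_meas a b w w' y : (a <= b <= T)%N -> w' \in atom b w ->
  (w' \in atom a y) = (w \in atom a y).
Proof.
move=> abT w'b; have aT : (a <= T)%N by lia.
have /eqP same : atom a w' == atom a w by rewrite -mem_atomE // (mem_atom_le abT w'b).
by rewrite !mem_atomE // same.
Qed.

Lemma meas_at_le (R : realType) a b (X : Omega -> R) :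
  (a <= b <= T)%N -> meas_at atom a X -> meas_at atom b X.
Proof. by move=> abT Xa w w' w'b; apply: Xa; exact: mem_atom_le w'b. Qed.

End Filtration.

Section Market.
Variables (R : realType) (Omega : finType) (M T : nat).
Variables (atom : nat -> Omega -> {set Omega}) (r : nat -> Omega -> R).
Variable S : 'I_M -> nat -> Omega -> R.
Hypotheses (filt : is_filtration T atom) (model : market_model T atom r S).

Lemma bond_meas t : (t <= T)%N -> meas_at atom t (bond r t).
Proof.
case: model => _ r_pred _ _ tT w w' w't; apply: eq_big_nat => s /andP[s1 st].
have sT : (1 <= s <= T)%N by lia.
have stT : (s.-1 <= t <= T)%N by lia.
by rewrite (r_pred s sT w w') // (mem_atom_le filt stT w't).
Qed.

Lemma disc_meas m t : (t <= T)%N -> meas_at atom t (disc r S m t).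
Proof.
case: model => _ _ S_adapted _ tT w w' w't.
by rewrite /disc (S_adapted m t tT w w' w't) (bond_meas tT w't).
Qed.

Section BuyAndHold.
Variables (m : 'I_M) (t u : nat) (w : Omega).
Hypothesis tuT : (t < u <= T)%N.

Local Notation X := (disc r S m).
Local Notation A := (atom t w).

Definition bh_units (s : nat) (v : Omega) : R :=
  if (t < s <= u)%N then (v \in A)%:R else 0.

Definition bh_hold (m' : 'I_M) (s : nat) (v : Omega) : R :=
  (m' == m)%:R * bh_units s v.

(* The purchase at time t is financed by borrowing X t; the sale at time u
   is kept in the bond. *)
Definition bh_cash (s : nat) (v : Omega) : R :=
  if (t < s)%N then (v \in A)%:R * ((if (u < s)%N then X u v else 0) - X t v)
  else 0.

Lemma bh_before s v : (s <= t)%N -> bh_cash s v = 0 /\ bh_units s v = 0.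
Proof.
by move=> st; rewrite /bh_cash /bh_units !ifF //; apply/negbTE; lia.
Qed.

Lemma bh_holding s v : (t < s <= u)%N ->
  bh_cash s v = - ((v \in A)%:R * X t v) /\ bh_units s v = (v \in A)%:R.
Proof.
move=> tsu; rewrite /bh_cash /bh_units tsu ifT; last lia.
by rewrite ifF ?sub0r ?mulrN //; apply/negbTE; lia.
Qed.

Lemma bh_after s v : (u < s)%N ->
  bh_cash s v = (v \in A)%:R * (X u v - X t v) /\ bh_units s v = 0.
Proof.
move=> us; rewrite /bh_cash /bh_units ifT; last lia.
by rewrite ifT // ifF //; apply/negbTE; lia.
Qed.

Lemma bh_predictable : predictable T atom bh_cash bh_hold.
Proof.
move=> s /andP[s1 sT]; split=> [|m'] v v' v'v.
- rewrite /bh_cash; case: ifP => // ts.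
  have tsT : (t <= s.-1 <= T)%N by lia.
  have tT : (t <= T)%N by lia.
  rewrite (mem_atom_meas filt _ tsT v'v) (meas_at_le filt tsT (disc_meas m tT) v'v).
  case: ifP => // us; have usT : (u <= s.-1 <= T)%N by lia.
  have uT : (u <= T)%N by lia.
  by rewrite (meas_at_le filt usT (disc_meas m uT) v'v).
- rewrite /bh_hold /bh_units; case: ifP => // /andP[ts _].
  have tsT : (t <= s.-1 <= T)%N by lia.
  by rewrite (mem_atom_meas filt _ tsT v'v).
Qed.

Lemma bh_self_financing : self_financing T r S bh_cash bh_hold.
Proof.
move=> s v _; under eq_bigr do rewrite /bh_hold -mulrBr.
rewrite sum_delta_scale; have [st | ts | ->] := ltngtP s t.
- have [-> ->] := bh_before v st.
  by have [-> ->] := bh_before v (ltnW st); lra.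
- have [su | us | ->] := ltngtP s u.
  + have holding_s : (t < s <= u)%N by lia.
    have holding_s1 : (t < s.+1 <= u)%N by lia.
    have [-> ->] := bh_holding v holding_s1.
    by have [-> ->] := bh_holding v holding_s; lra.
  + have [-> ->] := bh_after v (ltnW us : (u < s.+1)%N).
    by have [-> ->] := bh_after v us; lra.
  + have holding_u : (t < u <= u)%N by lia.
    have [-> ->] := bh_after v (ltnSn u).
    by have [-> ->] := bh_holding v holding_u; lra.
- have holding_t1 : (t < t.+1 <= u)%N by lia.
  have [-> ->] := bh_holding v holding_t1.
  by have [-> ->] := bh_before v (leqnn t); lra.
Qed.

Lemma bh_no_short_sales : no_short_sales T bh_hold.
Proof.
by move=> m' s v _; apply: mulr_ge0 => //; rewrite /bh_units; case: ifP.
Qed.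

Lemma bh_admissible : admissible T atom r S bh_cash bh_hold.
Proof.
by split; [exact: bh_predictable | exact: bh_self_financing | exact: bh_no_short_sales].
Qed.

Lemma bh_V0 v : V0 r S bh_cash bh_hold v = 0.
Proof.
rewrite /V0 sum_delta_scale; have [t0 | t_pos] := posnP t.
- have holding_1 : (t < 1 <= u)%N by lia.
  by have [-> ->] := bh_holding v holding_1; rewrite t0; lra.
- by have [-> ->] := bh_before v t_pos; lra.
Qed.

Lemma bh_VT v : Vt r S bh_cash bh_hold T v = (v \in A)%:R * (X u v - X t v).
Proof.
rewrite /Vt sum_delta_scale; have [uT | Tu | <-] := ltngtP u T.
- by have [-> ->] := bh_after v uT; lra.
- by lia.
- have holding_u : (t < u <= u)%N by lia.
  by have [-> ->] := bh_holding v holding_u; lra.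
Qed.

Lemma bh_arbitrage (Pset : set (Omega -> R)) : prob_family Pset ->
  (forall v, v \in A -> X t v < X u v) -> arbitrage_MU T atom r S bh_cash bh_hold Pset.
Proof.
move=> PF rise; have tT : (t <= T)%N by lia.
have VT_ge0 v : 0 <= Vt r S bh_cash bh_hold T v.
  rewrite bh_VT; have [vA | vA] := boolP (v \in A); last by rewrite mul0r.
  by rewrite mul1r subr_ge0 ltW // rise.
split; [exact: bh_admissible | exact: bh_V0 | exact: VT_ge0 |].
apply: (sup_expect_gt0 PF VT_ge0 (w := w)).
by rewrite bh_VT (mem_atom filt w tT) mul1r subr_gt0 rise // (mem_atom filt w tT).
Qed.

End BuyAndHold.

Lemma no_arbitrage_atom_le (Pset : set (Omega -> R)) m t u w :
  prob_family Pset -> no_arbitrage_MU T atom r S Pset -> (t <= u <= T)%N ->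
  exists2 w', w' \in atom t w & disc r S m u w' <= disc r S m t w.
Proof.
move=> PF NA tuT; have tT : (t <= T)%N by lia.
have [<- | neq_tu] := eqVneq t u; first by exists w; rewrite ?(mem_atom filt w tT).
have [/existsP[w' /andP[w'A le_w']] | none] :=
  boolP [exists w' in atom t w, disc r S m u w' <= disc r S m t w].
  by exists w'.
have lt_tuT : (t < u <= T)%N by lia.
exfalso; apply: NA; exists (bh_cash m t u w), (bh_hold m t u w).
apply: (bh_arbitrage lt_tuT PF) => v vA.
rewrite (disc_meas m tT vA) ltNge; apply: contraNN none => le_v.
by apply/existsP; exists v; rewrite vA.
Qed.

End Market.

Theorem mainTheorem7 (R : realType) (Omega : finType) (T M : nat)
  (atom : nat -> Omega -> {set Omega})
  (r : nat -> Omega -> R) (S : 'I_M -> nat -> Omega -> R)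
  (Pset : set (Omega -> R)) :
  (1 <= T)%N ->
  is_filtration T atom ->
  market_model T atom r S ->
  prob_family Pset ->
  no_arbitrage_MU T atom r S Pset ->
  exists Qset : set (Omega -> R),
    prob_family Qset /\
    forall (t u : nat) (m : 'I_M) (w : Omega), (t <= u <= T)%N ->
      inf [set cond_expect atom Q (disc r S m u) t w | Q in Qset `&` [set Q | 0 < Q w]]
        <= disc r S m t w.
Proof.
move=> _ filt model PF NA.
exists [set Q | is_prob Q]; split; first exact: prob_family_probs PF.
move=> t u m w tuT; have tT : (t <= T)%N by lia.
have [ws wsA le_ws] := no_arbitrage_atom_le filt model m w PF NA tuT.
exact: le_trans (inf_cond_expect_probs_le _ (mem_atom filt w tT) wsA) le_ws.
Qed.
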